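(* Let $n\ge 1$ and consider a radial distribution network whose matrices are $\mathbf{R}=\mathbf{M}^{-T}\mathbf{D}_r\mathbf{M}^{-1}$ and $\mathbf{X}=\mathbf{M}^{-T}\mathbf{D}_x\mathbf{M}^{-1}$, where $\mathbf{M}\in\mathbb{R}^{n\times n}$ is an invertible matrix determined by the network topology and $\mathbf{D}_r,\mathbf{D}_x$ are diagonal matrices with positive diagonal entries given by the resistances and reactances of the power lines (so $\mathbf{R},\mathbf{X}$ are positive definite). Suppose the ratio of resistance to reactance of every power line equals the same constant $\rho>0$. Let $v_0\in\mathbb{R}$ be fixed, $\mathbf{1}\in\mathbb{R}^n$ the all-ones vector, $\mathbf{v}^{ref}\in\mathbb{R}^n$ fixed, and consider the dynamics in which $\mathbf{v}_t=\mathbf{R}\mathbf{p}_t+\mathbf{X}\mathbf{q}_t+v_0\mathbf{1}$, $\tilde{\mathbf{v}}_t=\mathbf{v}_t-\mathbf{v}^{ref}$, and for each node $i$ and $t\ge1$, $$p_{i,t}=p_{i,t-1}-k_i^p\,\tilde v_{i,t-1},\qquad q_{i,t}=q_{i,t-1}-k_i^q\,\tilde v_{i,t-1},$$ so that $\tilde{\mathbf{v}}_t=(\mathbf{I}-\mathbf{R}\mathbf{K}^p-\mathbf{X}\mathbf{K}^q)\tilde{\mathbf{v}}_{t-1}$, where $\mathbf{K}^p=\mathrm{diag}(k_1^p,\dots,k_n^p)$ and $\mathbf{K}^q=\mathrm{diag}(k_1^q,\dots,k_n^q)$. If $$0\prec \rho\mathbf{K}^p+\mathbf{K}^q\prec 2\mathbf{X}^{-1}$$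 (in the positive definite ordering), then the equilibrium $\tilde{\mathbf{v}}=0$ of this dynamical system is locally exponentially stable.
   Context: This models the internal power distribution network of a data center under the Linear DistFlow approximation: $p_i,q_i$ are active and reactive power injections at node $i$, $v_i$ the node voltage, $v_0$ the root voltage at the point of connection to the transmission grid. The notation $\mathbf{A}\prec\mathbf{B}$ means $\mathbf{B}-\mathbf{A}$ is positive definite. *)

From HB Require Import structures.
From mathcomp Require Import all_boot all_order all_algebra.
Set Implicit Arguments. Unset Strict Implicit. Unset Printing Implicit Defensive.
Import Order.TTheory GRing.Theory Num.Theory.
Local Open Scope ring_scope.

Definition posdef (R : numDomainType) (n : nat) (A : 'M[R]_n) : Prop :=
  A^T = A /\ forall x : 'cV[R]_n, x != 0 -> 0 < (x^T *m A *m x) 0 0.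

Definition mx_lt (R : numDomainType) (n : nat) (A B : 'M[R]_n) : Prop :=
  posdef (B - A).

Definition vnorm (R : numDomainType) (n : nat) (v : 'cV[R]_n) : R :=
  \big[Num.max/0]_(i < n) `|v i 0|.

Definition vtilde_of (R : numDomainType) (n : nat) (Rm Xm : 'M[R]_n) (v0 : R)
  (vref p q : 'cV[R]_n) : 'cV[R]_n :=
  Rm *m p + Xm *m q + const_mx v0 - vref.

Fixpoint pq_traj (R : numDomainType) (n : nat) (Rm Xm Kp Kq : 'M[R]_n) (v0 : R)
  (vref p0 q0 : 'cV[R]_n) (t : nat) : 'cV[R]_n * 'cV[R]_n :=
  match t with
  | 0 => (p0, q0)
  | t'.+1 =>
      let pq := pq_traj Rm Xm Kp Kq v0 vref p0 q0 t' in
      let vt := vtilde_of Rm Xm v0 vref pq.1 pq.2 in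
      (pq.1 - Kp *m vt, pq.2 - Kq *m vt)
  end.

Definition vtilde_traj (R : numDomainType) (n : nat) (Rm Xm Kp Kq : 'M[R]_n) (v0 : R)
  (vref p0 q0 : 'cV[R]_n) (t : nat) : 'cV[R]_n :=
  let pq := pq_traj Rm Xm Kp Kq v0 vref p0 q0 t in
  vtilde_of Rm Xm v0 vref pq.1 pq.2.

Definition loc_exp_stable (R : numDomainType) (n : nat) (Rm Xm Kp Kq : 'M[R]_n)
  (v0 : R) (vref : 'cV[R]_n) : Prop :=
  exists (delta C lam : R), 0 < delta /\ 0 < C /\ 0 < lam /\ lam < 1 /\
    forall p0 q0 : 'cV[R]_n,
      vnorm (vtilde_traj Rm Xm Kp Kq v0 vref p0 q0 0) < delta ->
      forall t : nat,
        vnorm (vtilde_traj Rm Xm Kp Kq v0 vref p0 q0 t)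
          <= C * lam ^+ t * vnorm (vtilde_traj Rm Xm Kp Kq v0 vref p0 q0 0).

(* With K := rho Kp + Kq and Rm = rho Xm (all lines share the ratio rho), the
   voltage error evolves by v' = v - Xm K v.  The form V(v) = v^T K v is a
   Lyapunov function: with w = Xm K v one has
   V(v - w) = V(v) - w^T (2 Xm^-1 - K) w,
   and since v = K^-1 Xm^-1 w, V(v) is at most a constant c times the decrease,
   so V contracts by the factor (c + 1) / (c + 2).  Cauchy-Schwarz for the form
   V compares it with the max norm, which turns the geometric decay of V into
   exponential stability. *)

From HB Require Import structures.
From mathcomp Require Import all_boot all_order all_algebra.
From mathcomp Require Import lra.
Import Order.TTheory GRing.Theory Num.Theory.
Local Open Scope ring_scope.
Set Implicit Arguments. Unset Strict Implicit. Unset Printing Implicit Defensive.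

Section MatrixForms.
Variables (R : realFieldType) (n : nat).
Implicit Types (A B : 'M[R]_n) (x y z : 'cV[R]_n).

Definition mxform A x y : R := (x^T *m A *m y) 0 0.

Lemma mxformE A x y : mxform A x y = \sum_i \sum_j x i 0 * A i j * y j 0.
Proof.
rewrite /mxform mxE exchange_big; apply: eq_bigr => j _; rewrite mxE mulr_suml.
by apply: eq_bigr => i _; rewrite !mxE.
Qed.

Lemma mxformDl A x y z : mxform A (x + y) z = mxform A x z + mxform A y z.
Proof. by rewrite /mxform linearD /= !mulmxDl mxE. Qed.

Lemma mxformDr A x y z : mxform A x (y + z) = mxform A x y + mxform A x z.
Proof. by rewrite /mxform mulmxDr mxE. Qed.

Lemma mxformZl A a x y : mxform A (a *: x) y = a * mxform A x y.
Proof. by rewrite /mxform linearZ /= -!scalemxAl mxE. Qed.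

Lemma mxformZr A a x y : mxform A x (a *: y) = a * mxform A x y.
Proof. by rewrite /mxform -scalemxAr mxE. Qed.

Lemma mxformC A x y : A^T = A -> mxform A x y = mxform A y x.
Proof.
move=> A_sym; rewrite /mxform.
have -> : (x^T *m A *m y) 0 0 = (x^T *m A *m y)^T 0 0 by rewrite [RHS]mxE.
by rewrite !trmx_mul trmxK A_sym mulmxA.
Qed.

Lemma mxform_mulmx A B x y :
  mxform A (B *m x) (B *m y) = mxform (B^T *m A *m B) x y.
Proof. by rewrite /mxform trmx_mul !mulmxA. Qed.

Lemma mxform_invmxr A x y :
  A \in unitmx -> mxform A x (invmx A *m y) = (x^T *m y) 0 0.
Proof. by move=> A_unit; rewrite /mxform -mulmxA (mulmxA A) mulmxV ?mul1mx. Qed.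

Lemma posdef_mxform_ge0 A x : posdef A -> 0 <= mxform A x x.
Proof.
case=> _ A_pos; have [->|x_neq0] := eqVneq x 0; last exact/ltW/A_pos.
by rewrite /mxform mulmx0 mxE.
Qed.

Lemma posdef_unitmx A : posdef A -> A \in unitmx.
Proof.
case=> _ A_pos; rewrite -row_free_unit -kermx_eq0; apply/eqP/row_matrixP => i.
rewrite row0; set u := row i (kermx A).
have uA : u *m A = 0 by rewrite /u -row_mul mulmx_ker row0.
have [uT0|uT_neq0] := eqVneq u^T 0; first by rewrite -[u]trmxK uT0 linear0.
by move: (A_pos _ uT_neq0); rewrite trmxK uA mul0mx mxE ltxx.
Qed.

Lemma posdef_mxform_CauchySchwarz A x y :
  posdef A -> mxform A x y ^+ 2 <= mxform A x x * mxform A y y.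
Proof.
move=> A_posdef; have [->|y_neq0] := eqVneq y 0.
  by rewrite /mxform !mulmx0 mxE expr0n mulr0.
have yy_gt0 : 0 < mxform A y y by exact: A_posdef.2.
have := @posdef_mxform_ge0 A (mxform A y y *: x + (- mxform A x y) *: y) A_posdef.
rewrite !(mxformDl, mxformDr, mxformZl, mxformZr) (mxformC y x A_posdef.1) => h.
have : 0 <= mxform A y y * (mxform A x x * mxform A y y - mxform A x y ^+ 2) by nra.
by rewrite pmulr_rge0 // subr_ge0.
Qed.

Lemma mxform_invmx_col A i : A \in unitmx ->
  mxform A (invmx A *m delta_mx i 0) (invmx A *m delta_mx i 0) = invmx A i i.
Proof. by move=> A_unit; rewrite mxform_invmxr // -!colE !mxE. Qed.

Lemma posdef_invmx_diag_ge0 A i : posdef A -> 0 <= invmx A i i.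
Proof.
by move=> A_posdef; rewrite -mxform_invmx_col ?posdef_unitmx ?posdef_mxform_ge0.
Qed.

Lemma posdef_coord_sqr_le A x i :
  posdef A -> x i 0 ^+ 2 <= \tr (invmx A) * mxform A x x.
Proof.
move=> A_posdef; set u : 'cV_n := invmx A *m delta_mx i 0.
have ux : mxform A u x = x i 0.
  rewrite mxformC ?A_posdef.1 // mxform_invmxr ?posdef_unitmx //.
  by rewrite -colE !mxE.
have := posdef_mxform_CauchySchwarz u x A_posdef; rewrite ux.
move/le_trans; apply; apply: ler_wpM2r; first exact: posdef_mxform_ge0.
rewrite /u mxform_invmx_col ?posdef_unitmx // /mxtrace (bigD1 i) //= lerDl.
by apply: sumr_ge0 => j _; apply: posdef_invmx_diag_ge0.
Qed.

Lemma vnorm_ge0 x : 0 <= vnorm x.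
Proof. exact: bigmax_ge_id. Qed.

Lemma ler_abs_vnorm x i : `|x i 0| <= vnorm x.
Proof. exact: (le_bigmax _ (fun i => `|x i 0|)). Qed.

Lemma vnorm_sqr_le x b : 0 <= b -> (forall i, x i 0 ^+ 2 <= b) -> vnorm x ^+ 2 <= b.
Proof.
move=> b_ge0 x_le; rewrite /vnorm.
elim/big_ind: _ => [|y z y_le z_le|i _]; first by rewrite expr0n.
  by rewrite maxEle; case: ifP.
by rewrite real_normK ?num_real.
Qed.

Definition mxabs_sum A : R := \sum_i \sum_j `|A i j|.

Lemma mxabs_sum_ge0 A : 0 <= mxabs_sum A.
Proof. by apply: sumr_ge0 => i _; apply: sumr_ge0. Qed.

Lemma mxform_le_vnorm A x : mxform A x x <= mxabs_sum A * vnorm x ^+ 2.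
Proof.
rewrite mxformE mulr_suml; apply: le_trans (ler_norm _) _.
apply: le_trans (ler_norm_sum _ _ _) _; apply: ler_sum => i _.
rewrite mulr_suml; apply: le_trans (ler_norm_sum _ _ _) _; apply: ler_sum => j _.
rewrite !normrM mulrAC mulrC expr2 ler_wpM2l //.
by rewrite ler_pM ?ler_abs_vnorm.
Qed.

Lemma posdef_tr_invmx_ge0 A : posdef A -> 0 <= \tr (invmx A).
Proof. by move=> A_posdef; apply: sumr_ge0 => i _; apply: posdef_invmx_diag_ge0. Qed.

Lemma posdef_mxform_dominates A B x :
  posdef B -> mxform A x x <= mxabs_sum A * \tr (invmx B) * mxform B x x.
Proof.
move=> B_posdef; apply: le_trans (mxform_le_vnorm A x) _.
rewrite -mulrA ler_wpM2l ?mxabs_sum_ge0 //.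
apply: vnorm_sqr_le => [|i]; last exact: posdef_coord_sqr_le.
by rewrite mulr_ge0 ?posdef_tr_invmx_ge0 ?posdef_mxform_ge0.
Qed.

(* (1 + mu) / 2 bounds sqrt mu from above (AM-GM), which avoids square roots. *)
Lemma ler_geometric_of_sqr (a mu x x0 : R) (t : nat) :
  1 <= a -> 0 < mu -> 0 <= x -> 0 <= x0 ->
  x ^+ 2 <= a * mu ^+ t * x0 ^+ 2 -> x <= a * ((1 + mu) / 2) ^+ t * x0.
Proof.
move=> a_ge1 mu_gt0 x_ge0 x0_ge0 x_sqr_le; set lam := (1 + mu) / 2.
have mu_le : mu <= lam ^+ 2.
  by rewrite /lam expr_div_n ler_pdivlMr ?exprn_gt0 //; have := sqr_ge0 (1 - mu); nra.
have lam_ge0 : 0 <= lam by rewrite /lam; lra.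
clearbody lam.
have mut_le : mu ^+ t <= (lam ^+ t) ^+ 2.
  rewrite -exprM mulnC exprM.
  by apply: lerXn2r; [exact: ltW | exact: sqr_ge0 | exact: mu_le].
have bound_ge0 : 0 <= a * lam ^+ t * x0.
  by rewrite !mulr_ge0 ?exprn_ge0 // (le_trans ler01).
rewrite -ler_sqr; [|exact: x_ge0|exact: bound_ge0].
apply: le_trans x_sqr_le _; rewrite !exprMn ler_wpM2r ?sqr_ge0 //.
apply: ler_pM; rewrite ?exprn_ge0 ?(ltW mu_gt0) ?(le_trans ler01) //.
by rewrite expr2 ler_peMr ?(le_trans ler01).
Qed.

End MatrixForms.

Section ClosedLoop.
Variables (R : realFieldType) (n : nat) (X K : 'M[R]_n).
Hypotheses (X_sym : X^T = X) (X_unit : X \in unitmx) (K_posdef : posdef K)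
  (Q_posdef : posdef (2%:R *: invmx X - K)).

Lemma mxform_closed_loop (v : 'cV[R]_n) :
  let w := X *m K *m v in
  mxform K (v - w) (v - w) = mxform K v v - mxform (2%:R *: invmx X - K) w w.
Proof.
move=> w; have K_sym := K_posdef.1.
have wT : w^T = v^T *m K *m X by rewrite !trmx_mul X_sym K_sym mulmxA.
have cross_l : v^T *m K *m w = w^T *m invmx X *m w.
  by rewrite wT /w -!mulmxA (mulmxA (invmx X)) mulVmx // mul1mx.
have cross_r : w^T *m K *m v = w^T *m invmx X *m w.
  by rewrite -cross_l wT /w !mulmxA.
rewrite /mxform.
suff -> : (v - w)^T *m K *m (v - w) =
          v^T *m K *m v - w^T *m (2%:R *: invmx X - K) *m w.
  by rewrite mxE [in Y in _ + Y]mxE.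
rewrite !mulmxBr [(v - w)^T]linearB /= !mulmxBl cross_l cross_r.
rewrite -scalemxAr -scalemxAl scaler_nat mulr2n.
by rewrite -addrA -opprD addrA.
Qed.

Lemma closed_loop_contraction : exists2 mu, 0 < mu < 1 &
  forall v, mxform K (v - X *m K *m v) (v - X *m K *m v) <= mu * mxform K v v.
Proof.
set Q := 2%:R *: invmx X - K; set N := invmx K *m invmx X.
set c := mxabs_sum (N^T *m K *m N) * \tr (invmx Q).
have c_ge0 : 0 <= c by rewrite mulr_ge0 ?mxabs_sum_ge0 ?posdef_tr_invmx_ge0.
exists ((c + 1) / (c + 2)).
  by rewrite divr_gt0 ?ltr_pdivrMr ?mul1r ?ltrD2l ?ltr1n ?ltr_wpDl.
move=> v; rewrite mxform_closed_loop; set w := X *m K *m v.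
have vE : v = N *m w by rewrite /N /w -!mulmxA !mulKmx // posdef_unitmx.
have V_le : mxform K v v <= c * mxform Q w w.
  by rewrite {1 2}vE mxform_mulmx; apply: posdef_mxform_dominates.
have E_ge0 : 0 <= mxform Q w w := posdef_mxform_ge0 w Q_posdef.
rewrite mulrAC ler_pdivlMr ?ltr_wpDl //; nra.
Qed.

Lemma closed_loop_exp_decay : exists C lam, [/\ 0 < C, 0 < lam, lam < 1 &
  forall vt : nat -> 'cV[R]_n, (forall t, vt t.+1 = vt t - X *m K *m vt t) ->
  forall t, vnorm (vt t) <= C * lam ^+ t * vnorm (vt 0%N)].
Proof.
have [mu /andP[mu_gt0 mu_lt1] contract] := closed_loop_contraction.
have tr_ge0 := posdef_tr_invmx_ge0 K_posdef.
set a := \tr (invmx K) * mxabs_sum K + 1.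
have a_ge1 : 1 <= a by rewrite lerDr mulr_ge0 ?mxabs_sum_ge0.
exists a, ((1 + mu) / 2); split; [exact: lt_le_trans ltr01 a_ge1 | lra | lra |].
move=> vt step t; apply: ler_geometric_of_sqr => //; try exact: vnorm_ge0.
have V_decay :
    mxform K (vt t) (vt t) <= mu ^+ t * (mxabs_sum K * vnorm (vt 0%N) ^+ 2).
  elim: t => [|t IHt]; first by rewrite expr0 mul1r mxform_le_vnorm.
  rewrite step; apply: le_trans (contract _) _.
  by rewrite exprS -mulrA ler_pM2l.
apply: vnorm_sqr_le => [|i].
  apply: mulr_ge0 _ (sqr_ge0 _); apply: mulr_ge0 _ (exprn_ge0 _ (ltW mu_gt0)).
  exact: le_trans ler01 a_ge1.
apply: le_trans (posdef_coord_sqr_le _ i K_posdef) _.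
apply: le_trans (ler_wpM2l tr_ge0 V_decay) _.
have := vnorm_ge0 (vt 0%N); have := exprn_gt0 t mu_gt0; rewrite /a; nra.
Qed.

End ClosedLoop.

Lemma vtilde_ofB (R : numDomainType) (n : nat) (Rm Xm : 'M[R]_n) (v0 : R)
    (vref p q p' q' : 'cV[R]_n) :
  vtilde_of Rm Xm v0 vref (p - p') (q - q') =
  vtilde_of Rm Xm v0 vref p q - (Rm *m p' + Xm *m q').
Proof.
rewrite /vtilde_of !mulmxBr addrACA -opprD.
by rewrite (addrAC (Rm *m p + Xm *m q)) [LHS]addrAC.
Qed.

Lemma vtilde_traj_succ (R : numDomainType) (n : nat) (Rm Xm Kp Kq : 'M[R]_n)
    (v0 rho : R) (vref p0 q0 : 'cV[R]_n) (t : nat) :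
  Rm = rho *: Xm ->
  let vt := vtilde_traj Rm Xm Kp Kq v0 vref p0 q0 in
  vt t.+1 = vt t - Xm *m (rho *: Kp + Kq) *m vt t.
Proof.
move=> Rm_Xm vt; rewrite /vt /vtilde_traj /=; case: pq_traj => p q /=.
by rewrite vtilde_ofB Rm_Xm -mulmxA mulmxDl mulmxDr -!scalemxAl scalemxAr.
Qed.

Section NetworkMatrices.
Variables (R : numFieldType) (n : nat) (M : 'M[R]_n).
Implicit Types (a : R) (d : 'rV[R]_n).

Definition network_mx (d : 'rV[R]_n) := (invmx M)^T *m diag_mx d *m invmx M.

Lemma network_mx_sym d : (network_mx d)^T = network_mx d.
Proof. by rewrite /network_mx !trmx_mul trmxK tr_diag_mx mulmxA. Qed.

Lemma network_mxZ a d : network_mx (a *: d) = a *: network_mx d.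
Proof. by rewrite /network_mx linearZ /= -scalemxAr -scalemxAl. Qed.

Lemma network_mx_unit d :
  M \in unitmx -> (forall i, d 0 i != 0) -> network_mx d \in unitmx.
Proof.
move=> M_unit d_neq0; rewrite !unitmx_mul unitmx_tr unitmx_inv M_unit andbT /=.
by rewrite unitmxE det_diag unitfE; apply/prodf_neq0 => i _.
Qed.

End NetworkMatrices.

Theorem theorem4p2 (R : rcfType) (n : nat) (hn : (0 < n)%N)
  (M : 'M[R]_n) (dr dx : 'rV[R]_n) (rho v0 : R) (vref : 'cV[R]_n)
  (kp kq : 'rV[R]_n) :
  M \in unitmx ->
  (forall i, 0 < dr 0 i) -> (forall i, 0 < dx 0 i) ->
  0 < rho -> (forall i, dr 0 i = rho * dx 0 i) ->
  let Rm := (invmx M)^T *m diag_mx dr *m invmx M in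
  let Xm := (invmx M)^T *m diag_mx dx *m invmx M in
  let Kp := diag_mx kp in
  let Kq := diag_mx kq in
  mx_lt 0 (rho *: Kp + Kq) ->
  mx_lt (rho *: Kp + Kq) (2%:R *: invmx Xm) ->
  loc_exp_stable Rm Xm Kp Kq v0 vref.
Proof.
move=> M_unit _ dx_gt0 _ dr_dx Rm Xm Kp Kq K_posdef Q_posdef.
have dr_rho : dr = rho *: dx by apply/matrixP => i j; rewrite ord1 mxE dr_dx.
have Rm_Xm : Rm = rho *: Xm by rewrite /Rm dr_rho; exact: network_mxZ.
have Xm_unit : Xm \in unitmx.
  by apply: network_mx_unit => // i; rewrite lt0r_neq0.
rewrite /mx_lt subr0 in K_posdef.
have [C [lam [C_gt0 lam_gt0 lam_lt1 decay]]] :=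
  closed_loop_exp_decay (network_mx_sym M dx) Xm_unit K_posdef Q_posdef.
exists 1, C, lam; do 4!split => //; move=> p0 q0 _.
by apply: decay => t; exact: vtilde_traj_succ.
Qed.
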